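(* The set $\mathcal M$ of universal distance matrices is nonempty. Moreover, $\mathcal M$ is an everywhere dense $G_\delta$-subset of the cone $\mathcal R$ with respect to the weak topology.
   Context: Let $\mathcal R$ be the set of all infinite real matrices $r=\{r_{i,j}\}_{i,j=1}^\infty$ with $r_{i,i}=0$, $r_{i,j}\ge 0$, $r_{i,j}=r_{j,i}$ and $r_{i,k}+r_{k,j}\ge r_{i,j}$ for all $i,j,k\in\mathbb N$ (''distance matrices''); it carries the weak topology, i.e. the topology of entrywise convergence (product topology on $\mathbb R^{\mathbb N\times\mathbb N}$). A distance matrix is proper if $r_{i,j}>0$ for all $i\ne j$. For $n\in\mathbb N$, $\mathcal R_n$ denotes the analogous set of $n\times n$ distance matrices and $p_n(r)$ denotes the upper-left (NW) $n\times n$ corner of $r$. For $q\in\mathcal R_n$, the set of admissible vectors is $A(q)=\{a\in\mathbb R^n: |a_i-a_j|\le q_{i,j}\le a_i+a_j \text{ for all } i,j=1,\dots,n\}$, i.e. the vectors $a$ such that bordering $q$ by $a$ as an extra last row and column gives a distance matrix of order $n+1$. A proper distance matrix $r\in\mathcal R$ is universal if for every $n\in\mathbb N$, every $a\in A(p_n(r))$ and every $\epsilon>0$ there exists $m\in\mathbb N$ (necessarily $m>n$ can be taken) with $\max_{1\le i\le n}|r_{i,m}-a_i|<\epsilon$; equivalently, for each $n$ the set of vectors $\{(r_{1,j},\dots,r_{n,j})\}_{j>n}$ is dense in $A(p_n(r))$. $\mathcal M$ denotes the set of universal distance matrices. *)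

(* concrete reals R. Indices are 0-based (paper's i=1,2,... is our 0,1,...). *)
From Stdlib Require Import Reals.
Open Scope R_scope.

Definition mat := nat -> nat -> R.

Definition is_dist (r : mat) : Prop :=
  (forall i, r i i = 0) /\
  (forall i j, 0 <= r i j) /\
  (forall i j, r i j = r j i) /\
  (forall i j k, r i j <= r i k + r k j).

Definition is_proper (r : mat) : Prop := forall i j, i <> j -> 0 < r i j.

Definition admissible (n : nat) (r : mat) (a : nat -> R) : Prop :=
  forall i j, (i < n)%nat -> (j < n)%nat ->
    Rabs (a i - a j) <= r i j /\ r i j <= a i + a j.

Definition universal (r : mat) : Prop :=
  is_dist r /\ is_proper r /\
  forall (n : nat) (a : nat -> R) (eps : R),
    admissible n r a -> 0 < eps ->
    exists m : nat, forall i, (i < n)%nat -> Rabs (r i m - a i) < eps.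

(* Weak topology = product topology on R^(N x N): U is open iff around each of
   its points it contains a basic cylinder constraining finitely many entries
   (every finite set of entries lies in some NW n x n corner). *)
Definition weak_open (U : mat -> Prop) : Prop :=
  forall r, U r -> exists (n : nat) (eps : R), 0 < eps /\
    forall s, (forall i j, (i < n)%nat -> (j < n)%nat -> Rabs (s i j - r i j) < eps) -> U s.

Definition dense_in_cone (D : mat -> Prop) : Prop :=
  forall U, weak_open U -> (exists s, is_dist s /\ U s) -> exists r, D r /\ U r.

Definition Gdelta_in_cone (D : mat -> Prop) : Prop :=
  exists U : nat -> mat -> Prop, (forall k, weak_open (U k)) /\
    forall r, D r <-> (is_dist r /\ forall k, U k r).

(* Universality can be tested on countably many finite conditions.  For a
   grid vector q with entries in (1/(d+1))N, retract q onto the admissible set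
   A(p_n(r)) by an explicit map (McShane's extension of q followed by the least
   uniform lift restoring r_ik <= a_i + a_k) and ask for a column of r within
   1/(d+1) of the result.  The retraction is 3-Lipschitz in the entries of r,
   so each condition is open, and it moves an admissible vector at most 2/(d+1)
   away from its grid approximation, so the conditions together with
   properness cut out exactly the universal matrices in the cone.  For density,
   lift a distance matrix off the diagonal to make its corner proper, then add
   points one at a time: the k-th point realises the retracted grid vector of a
   condition scheduled at step k, extended to all earlier points by McShane's
   formula and shifted by a small positive constant to stay proper.  Every
   condition is scheduled at arbitrarily late steps, so the limit is universal. *)

From Stdlib Require Import Reals RList List ZArith Lra Lia Cantor.
Open Scope R_scope.

Lemma Rabs_bounds x : - Rabs x <= x <= Rabs x.
Proof. pose proof (Rle_abs x); pose proof (Rle_abs (- x)); rewrite Rabs_Ropp in *; lra. Qed.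

Lemma Rabs_le_bounds x y : Rabs x <= y -> - y <= x <= y.
Proof. pose proof (Rabs_bounds x); lra. Qed.

Definition max_below (n : nat) (f : nat -> R) : R := MaxRlist (map f (seq 0 n)).
Definition min_below (n : nat) (f : nat -> R) : R := - max_below n (fun i => - f i).

Lemma max_below_ge n f i : (i < n)%nat -> f i <= max_below n f.
Proof. intros Hi; apply MaxRlist_P1, in_map, in_seq; lia. Qed.

Lemma max_below_attained n f :
  (0 < n)%nat -> exists i, (i < n)%nat /\ max_below n f = f i.
Proof.
  intros Hn.
  assert (Hin : In (max_below n f) (map f (seq 0 n))).
  { apply MaxRlist_P2; exists (f 0%nat); apply in_map, in_seq; lia. }
  apply in_map_iff in Hin as [i [Hi Hseq]]; apply in_seq in Hseq.
  exists i; split; [lia | easy].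
Qed.

Lemma max_below_lub n f t :
  (0 < n)%nat -> (forall i, (i < n)%nat -> f i <= t) -> max_below n f <= t.
Proof. intros Hn Hf; destruct (max_below_attained n f Hn) as [i [Hi ->]]; auto. Qed.

Lemma max_below_shift n f g t : (0 < n)%nat ->
  (forall i, (i < n)%nat -> f i <= g i + t) -> max_below n f <= max_below n g + t.
Proof.
  intros Hn Hfg; apply max_below_lub; trivial.
  intros i Hi; pose proof (max_below_ge n g i Hi); pose proof (Hfg i Hi); lra.
Qed.

Lemma min_below_le n f i : (i < n)%nat -> min_below n f <= f i.
Proof. intros Hi; pose proof (max_below_ge n (fun i => - f i) i Hi); unfold min_below; lra. Qed.

Lemma min_below_glb n f t :
  (0 < n)%nat -> (forall i, (i < n)%nat -> t <= f i) -> t <= min_below n f.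
Proof.
  intros Hn Hf; unfold min_below.
  enough (max_below n (fun i => - f i) <= - t) by lra.
  apply max_below_lub; trivial; intros i Hi; pose proof (Hf i Hi); lra.
Qed.

Lemma min_below_shift n f g t : (0 < n)%nat ->
  (forall i, (i < n)%nat -> f i <= g i + t) -> min_below n f <= min_below n g + t.
Proof.
  intros Hn Hfg; unfold min_below.
  enough (max_below n (fun i => - g i) <= max_below n (fun i => - f i) + t) by lra.
  apply max_below_shift; trivial; intros i Hi; pose proof (Hfg i Hi); lra.
Qed.

Lemma uniform_slack n (f : nat -> R) c : (forall i, (i < n)%nat -> f i < c) ->
  exists s, 0 < s /\ forall i, (i < n)%nat -> f i + s <= c.
Proof.
  intros Hf; destruct n as [|n].
  { exists 1; split; [lra | intros; lia]. }
  destruct (max_below_attained (S n) f ltac:(lia)) as [i [Hi Hmax]].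
  exists (c - max_below (S n) f); split.
  - rewrite Hmax; pose proof (Hf i Hi); lra.
  - intros j Hj; pose proof (max_below_ge (S n) f j Hj); lra.
Qed.

Definition nat_floor (x : R) : nat := Z.to_nat (Int_part x).

Lemma nat_floor_spec x : 0 <= x -> INR (nat_floor x) <= x < INR (nat_floor x) + 1.
Proof.
  intros Hx; destruct (base_Int_part x) as [Hle Hgt].
  assert (Hz : (-1 < Int_part x)%Z) by (apply lt_IZR; lra).
  unfold nat_floor; rewrite INR_IZR_INZ, Z2Nat.id by lia; lra.
Qed.

Fixpoint code_seq (n : nat) (c : nat -> nat) : nat :=
  match n with
  | 0 => 0
  | S n => to_nat (c 0%nat, code_seq n (fun i => c (S i)))
  end.

Fixpoint decode_seq (w i : nat) : nat :=
  match i with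
  | 0 => fst (of_nat w)
  | S i => decode_seq (snd (of_nat w)) i
  end.

Lemma decode_code_seq n c i : (i < n)%nat -> decode_seq (code_seq n c) i = c i.
Proof.
  revert c i; induction n as [|n IH]; intros c [|i] Hi; try lia;
    cbn [code_seq decode_seq]; rewrite cancel_of_to;
    [reflexivity | apply (IH (fun i => c (S i))); lia].
Qed.

Definition untriple (k : nat) : nat * nat * nat :=
  let (n, y) := of_nat k in let (w, d) := of_nat y in (n, w, d).

Lemma untriple_surj n w d : exists k, untriple k = (n, w, d).
Proof.
  exists (to_nat (n, to_nat (w, d))); unfold untriple.
  rewrite !cancel_of_to; reflexivity.
Qed.

Definition dist_below (n : nat) (b : mat) : Prop :=
  (forall i, (i < n)%nat -> b i i = 0) /\
  (forall i j, (i < n)%nat -> (j < n)%nat -> b i j = b j i) /\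
  (forall i j k, (i < n)%nat -> (j < n)%nat -> (k < n)%nat -> b i j <= b i k + b k j).

Definition proper_below (n : nat) (b : mat) : Prop :=
  forall i j, (i < n)%nat -> (j < n)%nat -> i <> j -> 0 < b i j.

Definition agree_below (n : nat) (b s : mat) : Prop :=
  forall i j, (i < n)%nat -> (j < n)%nat -> b i j = s i j.

Lemma dist_below_mono m n b : (m <= n)%nat -> dist_below n b -> dist_below m b.
Proof.
  intros Hmn [H0 [Hs Ht]]; split; [|split]; intros.
  - apply H0; lia.
  - apply Hs; lia.
  - apply Ht; lia.
Qed.

Lemma proper_below_mono m n b : (m <= n)%nat -> proper_below n b -> proper_below m b.
Proof. intros Hmn Hb i j Hi Hj; apply Hb; lia. Qed.

Lemma dist_below_agree n b s : agree_below n b s -> dist_below n s -> dist_below n b.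
Proof.
  intros E [H0 [Hs Ht]]; split; [|split]; intros; rewrite ?E by assumption; auto.
Qed.

Lemma proper_below_agree n b s : agree_below n b s -> proper_below n s -> proper_below n b.
Proof. intros E Hp i j Hi Hj Hij; rewrite E by assumption; auto. Qed.

Lemma dist_below_of_is_dist n r : is_dist r -> dist_below n r.
Proof. intros [H0 [_ [Hs Ht]]]; split; [|split]; auto. Qed.

Lemma is_dist_of_below r : (forall n, dist_below n r) -> is_dist r.
Proof.
  intros Hr; split; [|split; [|split]].
  - intros i; apply (Hr (S i)); lia.
  - intros i j; destruct (Hr (S (Nat.max i j))) as [H0 [Hs Ht]].
    pose proof (Ht i i j ltac:(lia) ltac:(lia) ltac:(lia)).
    rewrite H0, (Hs j i) in * by lia; lra.
  - intros i j; apply (Hr (S (Nat.max i j))); lia.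
  - intros i j k; apply (Hr (S (Nat.max i (Nat.max j k)))); lia.
Qed.

Lemma is_proper_of_below r : (forall n, proper_below n r) -> is_proper r.
Proof. intros Hr i j; apply (Hr (S (Nat.max i j))); lia. Qed.

Lemma admissible_nonneg n b a j :
  b j j = 0 -> admissible n b a -> (j < n)%nat -> 0 <= a j.
Proof. intros H0 Ha Hj; destruct (Ha j j Hj Hj) as [_ Hle]; lra. Qed.

Lemma admissible_shift n b a t :
  0 <= t -> admissible n b a -> admissible n b (fun j => a j + t).
Proof.
  intros Ht Ha i j Hi Hj; destruct (Ha i j Hi Hj) as [Hd Hs]; split; [|lra].
  replace (a i + t - (a j + t)) with (a i - a j) by ring; exact Hd.
Qed.

Definition mcshane (b : mat) (n : nat) (g : nat -> R) (j : nat) : R :=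
  min_below n (fun i => g i + b i j).

Section McShane.

Variables (b : mat) (n N : nat).
Hypotheses (n_pos : (0 < n)%nat) (n_le_N : (n <= N)%nat) (b_dist : dist_below N b).

Lemma mcshane_le g j l : (j < N)%nat -> (l < N)%nat ->
  mcshane b n g j <= mcshane b n g l + b j l.
Proof.
  destruct b_dist as [_ [Hs Ht]]; intros Hj Hl; apply min_below_shift; trivial.
  intros i Hi; rewrite (Hs j l) by assumption; pose proof (Ht i j l ltac:(lia) Hj Hl); lra.
Qed.

Lemma mcshane_agree g j : admissible n b g -> (j < n)%nat -> mcshane b n g j = g j.
Proof.
  destruct b_dist as [H0 _]; intros Hg Hj; apply Rle_antisym.
  - pose proof (min_below_le n (fun i => g i + b i j) j Hj) as Hle; cbv beta in Hle.
    rewrite H0 in Hle by lia; unfold mcshane; lra.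
  - apply min_below_glb; trivial; intros i Hi.
    destruct (Hg i j Hi Hj) as [Hd _]; apply Rabs_le_bounds in Hd; lra.
Qed.

Lemma mcshane_admissible g : admissible n b g -> admissible N b (mcshane b n g).
Proof.
  destruct b_dist as [_ [Hs Ht]]; intros Hg j l Hj Hl; split.
  - apply Rabs_le; pose proof (mcshane_le g j l Hj Hl);
      pose proof (mcshane_le g l j Hl Hj); rewrite (Hs l j) in * by assumption; lra.
  - enough (b j l - mcshane b n g j <= mcshane b n g l) by lra.
    apply min_below_glb; trivial; intros i' Hi'.
    enough (b j l - g i' - b i' l <= mcshane b n g j) by lra.
    apply min_below_glb; trivial; intros i Hi.
    destruct (Hg i i' Hi Hi') as [_ Hii'].
    pose proof (Ht j l i Hj Hl ltac:(lia)); pose proof (Ht i l i' ltac:(lia) Hl ltac:(lia)).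
    rewrite (Hs i j) by lia; lra.
Qed.

End McShane.

(* [mcshane b n q] is the largest minorant of [q] that is 1-Lipschitz for [b];
   lifting it by the least constant that restores [b i k <= a i + a k] gives an
   admissible vector, which equals [q] when [q] is already admissible. *)
Definition adm_lift (b : mat) (n : nat) (h : nat -> R) : R :=
  Rmax 0 (max_below n (fun i => max_below n (fun k => (b i k - h i - h k) / 2))).

Definition retract_adm (b : mat) (n : nat) (q : nat -> R) (i : nat) : R :=
  mcshane b n q i + adm_lift b n (mcshane b n q).

Lemma adm_lift_nonneg b n h : 0 <= adm_lift b n h.
Proof. apply Rmax_l. Qed.

Lemma adm_lift_shift b s n h h' t : (0 < n)%nat -> 0 <= t ->
  (forall i k, (i < n)%nat -> (k < n)%nat ->
    (b i k - h i - h k) / 2 <= (s i k - h' i - h' k) / 2 + t) ->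
  adm_lift b n h <= adm_lift s n h' + t.
Proof.
  intros Hn Ht Hterm; pose proof (adm_lift_nonneg s n h').
  unfold adm_lift at 1; apply Rmax_lub; [lra|].
  eapply Rle_trans; [|apply Rplus_le_compat_r, Rmax_r].
  apply max_below_shift; trivial; intros i Hi.
  apply max_below_shift; trivial; intros k Hk; apply Hterm; assumption.
Qed.

Lemma mcshane_perturb b s n q t i :
  (forall i j, (i < n)%nat -> (j < n)%nat -> Rabs (b i j - s i j) <= t) ->
  (i < n)%nat -> Rabs (mcshane b n q i - mcshane s n q i) <= t.
Proof.
  intros Hbs Hi; apply Rabs_le; split.
  - enough (mcshane s n q i <= mcshane b n q i + t) by lra.
    apply min_below_shift; [lia|]; intros j Hj.
    pose proof (Rabs_le_bounds _ _ (Hbs j i Hj Hi)); lra.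
  - enough (mcshane b n q i <= mcshane s n q i + t) by lra.
    apply min_below_shift; [lia|]; intros j Hj.
    pose proof (Rabs_le_bounds _ _ (Hbs j i Hj Hi)); lra.
Qed.

Lemma retract_adm_admissible b n q : dist_below n b -> admissible n b (retract_adm b n q).
Proof.
  intros Hb i k Hi Hk; pose proof Hb as [_ [Hs _]]; unfold retract_adm; split.
  - apply Rabs_le; pose proof (mcshane_le b n n ltac:(lia) (le_n n) Hb q i k Hi Hk).
    pose proof (mcshane_le b n n ltac:(lia) (le_n n) Hb q k i Hk Hi).
    rewrite (Hs k i) in * by assumption; lra.
  - enough ((b i k - mcshane b n q i - mcshane b n q k) / 2 <= adm_lift b n (mcshane b n q)) by lra.
    unfold adm_lift; eapply Rle_trans; [|apply Rmax_r].
    eapply Rle_trans; [|apply (max_below_ge _ _ i Hi)].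
    apply (max_below_ge _ (fun k => _) k Hk).
Qed.

Lemma retract_adm_near b n q a u : dist_below n b -> admissible n b a ->
  (forall j, (j < n)%nat -> Rabs (q j - a j) <= u) ->
  forall i, (i < n)%nat -> Rabs (retract_adm b n q i - a i) <= 2 * u.
Proof.
  intros [H0 _] Ha Hq i0 Hi0.
  assert (Hlow : forall i, (i < n)%nat -> a i - u <= mcshane b n q i <= a i + u).
  { intros i Hi; split.
    - apply min_below_glb; [lia|]; intros j Hj.
      destruct (Ha j i Hj Hi) as [Hd _]; apply Rabs_le_bounds in Hd.
      pose proof (Rabs_le_bounds _ _ (Hq j Hj)); lra.
    - pose proof (min_below_le n (fun j => q j + b j i) i Hi) as Hle; cbv beta in Hle.
      pose proof (Rabs_le_bounds _ _ (Hq i Hi)); rewrite H0 in Hle by assumption.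
      unfold mcshane; lra. }
  assert (Hlift : adm_lift b n (mcshane b n q) <= u).
  { pose proof (Rabs_le_bounds _ _ (Hq i0 Hi0)).
    apply Rmax_lub; [lra|].
    apply max_below_lub; [lia|]; intros i Hi; apply max_below_lub; [lia|]; intros k Hk.
    destruct (Ha i k Hi Hk) as [_ Hs]; pose proof (Hlow i Hi); pose proof (Hlow k Hk); lra. }
  pose proof (Hlow i0 Hi0); pose proof (adm_lift_nonneg b n (mcshane b n q)).
  unfold retract_adm; apply Rabs_le; lra.
Qed.

Lemma retract_adm_lipschitz b s n q t :
  (forall i j, (i < n)%nat -> (j < n)%nat -> Rabs (b i j - s i j) <= t) ->
  forall i, (i < n)%nat -> Rabs (retract_adm b n q i - retract_adm s n q i) <= 3 * t.
Proof.
  intros Hbs i0 Hi0.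
  pose proof (Rabs_le_bounds _ _ (Hbs i0 i0 Hi0 Hi0)).
  assert (Hterm : forall i j, (i < n)%nat -> (j < n)%nat ->
    Rabs ((b i j - mcshane b n q i - mcshane b n q j) / 2
          - (s i j - mcshane s n q i - mcshane s n q j) / 2) <= 3 * t / 2).
  { intros i j Hi Hj; apply Rabs_le.
    pose proof (Rabs_le_bounds _ _ (mcshane_perturb b s n q t i Hbs Hi)).
    pose proof (Rabs_le_bounds _ _ (mcshane_perturb b s n q t j Hbs Hj)).
    pose proof (Rabs_le_bounds _ _ (Hbs i j Hi Hj)); lra. }
  pose proof (adm_lift_shift b s n (mcshane b n q) (mcshane s n q) (3 * t / 2) ltac:(lia)
    ltac:(lra) ltac:(intros i j Hi Hj; pose proof (Rabs_le_bounds _ _ (Hterm i j Hi Hj)); lra)).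
  pose proof (adm_lift_shift s b n (mcshane s n q) (mcshane b n q) (3 * t / 2) ltac:(lia)
    ltac:(lra) ltac:(intros i j Hi Hj; pose proof (Rabs_le_bounds _ _ (Hterm i j Hi Hj)); lra)).
  pose proof (Rabs_le_bounds _ _ (mcshane_perturb b s n q t i0 Hbs Hi0)).
  unfold retract_adm; apply Rabs_le; lra.
Qed.

Lemma retract_adm_agree b s n q i :
  agree_below n b s -> (i < n)%nat -> retract_adm b n q i = retract_adm s n q i.
Proof.
  intros E Hi.
  assert (H : Rabs (retract_adm b n q i - retract_adm s n q i) <= 3 * 0).
  { apply retract_adm_lipschitz; trivial; intros j k Hj Hk.
    rewrite E, Rminus_diag, Rabs_R0 by assumption; lra. }
  apply Rabs_le_bounds in H; lra.
Qed.

Definition grid (w d : nat) (i : nat) : R := INR (decode_seq w i) / INR (S d).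

Definition floor_code (n d : nat) (a : nat -> R) : nat :=
  code_seq n (fun i => nat_floor (a i * INR (S d))).

Lemma grid_floor_code n d a j : 0 <= a j -> (j < n)%nat ->
  Rabs (grid (floor_code n d a) d j - a j) <= / INR (S d).
Proof.
  intros Ha Hj; unfold grid, floor_code; rewrite decode_code_seq by assumption.
  assert (HD : 0 < INR (S d)) by (apply lt_0_INR; lia).
  destruct (nat_floor_spec (a j * INR (S d))) as [Hlo Hhi]; [nra|].
  replace (INR (nat_floor (a j * INR (S d))) / INR (S d) - a j)
    with ((INR (nat_floor (a j * INR (S d))) - a j * INR (S d)) * / INR (S d)) by (field; lra).
  rewrite Rabs_mult, (Rabs_pos_eq (/ INR (S d))) by (left; apply Rinv_0_lt_compat; lra).
  rewrite <- (Rmult_1_l (/ INR (S d))) at 2.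
  apply Rmult_le_compat_r; [left; apply Rinv_0_lt_compat; lra | apply Rabs_le; lra].
Qed.

Definition hits (n w d : nat) (r : mat) : Prop :=
  exists m, forall i, (i < n)%nat ->
    Rabs (r i m - retract_adm r n (grid w d) i) < / INR (S d).

Lemma hits_open n w d : weak_open (hits n w d).
Proof.
  intros r [m Hm]; destruct (uniform_slack n _ _ Hm) as [s [Hs Hslack]].
  exists (Nat.max n (S m)), (s / 4); split; [lra|].
  intros r' Hr'; exists m; intros i Hi.
  assert (HG : Rabs (retract_adm r' n (grid w d) i - retract_adm r n (grid w d) i) <= 3 * (s / 4)).
  { apply retract_adm_lipschitz; [|assumption]; intros j k Hj Hk; left; apply Hr'; lia. }
  pose proof (Rabs_def2 _ _ (Hr' i m ltac:(lia) ltac:(lia))).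
  pose proof (Rabs_le_bounds _ _ HG); pose proof (Hslack i Hi).
  pose proof (Rabs_bounds (r i m - retract_adm r n (grid w d) i)).
  apply Rabs_def1; lra.
Qed.

Lemma universal_hits r n w d : universal r -> hits n w d r.
Proof.
  intros [Hd [_ Hu]]; apply Hu.
  - apply retract_adm_admissible, dist_below_of_is_dist; assumption.
  - apply Rinv_0_lt_compat, lt_0_INR; lia.
Qed.

Lemma hits_universal r : is_dist r -> is_proper r ->
  (forall n w d, hits n w d r) -> universal r.
Proof.
  intros Hd Hp Hh; split; [|split]; trivial.
  intros n a eps Ha Heps.
  destruct (archimed_cor1 (eps / 3)) as [D [HD HD0]]; [lra|].
  replace D with (S (pred D)) in HD by lia; set (d := pred D) in HD.
  destruct (Hh n (floor_code n d a) d) as [m Hm]; exists m; intros i Hi.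
  assert (Hnear : Rabs (retract_adm r n (grid (floor_code n d a) d) i - a i) <= 2 * / INR (S d)).
  { apply retract_adm_near; trivial; [apply dist_below_of_is_dist; assumption|].
    intros j Hj; apply grid_floor_code; trivial.
    apply (admissible_nonneg n r); trivial; apply Hd. }
  pose proof (Rabs_def2 _ _ (Hm i Hi)); pose proof (Rabs_le_bounds _ _ Hnear).
  apply Rabs_def1; lra.
Qed.

Definition extend (b : mat) (N : nat) (e : nat -> R) : mat := fun i j =>
  if Nat.eq_dec i N then (if Nat.eq_dec j N then 0 else e j)
  else if Nat.eq_dec j N then e i else b i j.

Lemma extend_agree b N e : agree_below N (extend b N e) b.
Proof.
  intros i j Hi Hj; unfold extend.
  destruct (Nat.eq_dec i N); [lia|]; destruct (Nat.eq_dec j N); [lia|reflexivity].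
Qed.

Lemma extend_new b N e i : (i < N)%nat -> extend b N e i N = e i.
Proof.
  intros Hi; unfold extend.
  destruct (Nat.eq_dec i N); [lia|]; destruct (Nat.eq_dec N N); [reflexivity|lia].
Qed.

Lemma extend_dist b N e : dist_below N b -> admissible N b e ->
  dist_below (S N) (extend b N e).
Proof.
  intros [H0 [Hs Ht]] He.
  assert (Hpos : forall j, (j < N)%nat -> 0 <= e j).
  { intros j Hj; exact (admissible_nonneg N b e j (H0 j Hj) He Hj). }
  assert (Hlip : forall j l, (j < N)%nat -> (l < N)%nat -> e j <= e l + b l j).
  { intros j l Hj Hl; destruct (He l j Hl Hj) as [Hd _]; apply Rabs_le_bounds in Hd; lra. }
  assert (Hsum : forall j l, (j < N)%nat -> (l < N)%nat -> b j l <= e j + e l).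
  { intros j l Hj Hl; apply (He j l Hj Hl). }
  unfold extend; split; [|split].
  - intros i Hi; destruct (Nat.eq_dec i N); [reflexivity | apply H0; lia].
  - intros i j Hi Hj; destruct (Nat.eq_dec i N), (Nat.eq_dec j N); subst;
      [reflexivity | reflexivity | reflexivity | apply Hs; lia].
  - intros i j k Hi Hj Hk.
    destruct (Nat.eq_dec i N), (Nat.eq_dec j N), (Nat.eq_dec k N); subst; try lia.
    + lra.
    + pose proof (Hpos k ltac:(lia)); lra.
    + lra.
    + apply Hlip; lia.
    + lra.
    + rewrite (Hs i k) by lia; pose proof (Hlip i k ltac:(lia) ltac:(lia)); lra.
    + apply Hsum; lia.
    + apply Ht; lia.
Qed.

Lemma extend_proper b N e : proper_below N b -> (forall j, (j < N)%nat -> 0 < e j) ->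
  proper_below (S N) (extend b N e).
Proof.
  intros Hb He i j Hi Hj Hij; unfold extend.
  destruct (Nat.eq_dec i N), (Nat.eq_dec j N); subst; try lia;
    [apply He | apply He | apply Hb]; lia.
Qed.

Definition step_task (k : nat) : nat * nat * nat := untriple (fst (of_nat k)).

Lemma step_task_surj n w d B : exists k, (B <= k)%nat /\ step_task k = (n, w, d).
Proof.
  destruct (untriple_surj n w d) as [t Ht]; exists (to_nat (t, B)); split.
  - pose proof (to_nat_non_decreasing t B); lia.
  - unfold step_task; rewrite cancel_of_to; exact Ht.
Qed.

(* Clamping [n] into [1, N] keeps the row admissible when the condition scheduled
   at step [k] does not apply yet; the shift [1/(d+2) < 1/(d+1)] keeps the new
   point at positive distance from all others. *)
Definition new_row (b : mat) (N k : nat) : nat -> R :=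
  let '(n, w, d) := step_task k in
  let n' := Nat.max 1 (Nat.min n N) in
  fun j => mcshane b n' (retract_adm b n' (grid w d)) j + / INR (S (S d)).

Lemma new_row_admissible b N k : (0 < N)%nat -> dist_below N b ->
  admissible N b (new_row b N k) /\ forall j, (j < N)%nat -> 0 < new_row b N k j.
Proof.
  intros HN Hb; unfold new_row; destruct (step_task k) as [[n w] d].
  set (n' := Nat.max 1 (Nat.min n N)).
  assert (Hadm : admissible N b (mcshane b n' (retract_adm b n' (grid w d)))).
  { apply mcshane_admissible; trivial; try lia.
    apply retract_adm_admissible, (dist_below_mono n' N); [lia | assumption]. }
  assert (Hd : 0 < / INR (S (S d))) by (apply Rinv_0_lt_compat, lt_0_INR; lia).
  split; [apply admissible_shift; [lra | exact Hadm]|].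
  intros j Hj; pose proof (admissible_nonneg _ _ _ j (proj1 Hb j Hj) Hadm Hj); lra.
Qed.

Lemma new_row_task b N k n w d i : dist_below N b -> step_task k = (n, w, d) ->
  (n <= N)%nat -> (i < n)%nat ->
  new_row b N k i = retract_adm b n (grid w d) i + / INR (S (S d)).
Proof.
  intros Hb Hk HnN Hi; unfold new_row; rewrite Hk.
  replace (Nat.max 1 (Nat.min n N)) with n by lia.
  rewrite mcshane_agree with (N := N); trivial; try lia.
  apply retract_adm_admissible, (dist_below_mono n N); assumption.
Qed.

Fixpoint build (t0 : mat) (n0 k : nat) : mat :=
  match k with
  | 0 => t0
  | S k => extend (build t0 n0 k) (n0 + k) (new_row (build t0 n0 k) (n0 + k) k)
  end.

Definition limit_of_build (t0 : mat) (n0 : nat) : mat :=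
  fun i j => build t0 n0 (S (Nat.max i j)) i j.

Section Construction.

Variables (t0 : mat) (n0 : nat).
Hypotheses (n0_pos : (0 < n0)%nat) (t0_dist : dist_below n0 t0)
  (t0_proper : proper_below n0 t0).

Lemma build_dist k :
  dist_below (n0 + k) (build t0 n0 k) /\ proper_below (n0 + k) (build t0 n0 k).
Proof.
  induction k as [|k [IHd IHp]]; [rewrite Nat.add_0_r; split; assumption|].
  destruct (new_row_admissible (build t0 n0 k) (n0 + k) k ltac:(lia) IHd) as [Ha Hp].
  rewrite Nat.add_succ_r; split; [apply extend_dist | apply extend_proper]; assumption.
Qed.

Lemma build_stable k k' : (k <= k')%nat -> agree_below (n0 + k) (build t0 n0 k') (build t0 n0 k).
Proof.
  induction 1 as [|k' Hkk' IH]; intros i j Hi Hj; [reflexivity|].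
  cbn [build]; rewrite extend_agree by lia; apply IH; assumption.
Qed.

Lemma limit_agree k : agree_below (n0 + k) (limit_of_build t0 n0) (build t0 n0 k).
Proof.
  intros i j Hi Hj; unfold limit_of_build.
  rewrite <- (build_stable (S (Nat.max i j)) (Nat.max k (S (Nat.max i j)))) by lia.
  apply build_stable; lia.
Qed.

Lemma limit_extends : agree_below n0 (limit_of_build t0 n0) t0.
Proof. intros i j Hi Hj; apply (limit_agree 0); lia. Qed.

Lemma limit_hits n w d : hits n w d (limit_of_build t0 n0).
Proof.
  destruct n as [|n']; [exists 0%nat; intros; lia|]; set (n := S n').
  destruct (step_task_surj n w d n) as [k [Hk Htask]].
  destruct (build_dist k) as [Hbk _].
  exists (n0 + k)%nat; intros i Hi.
  rewrite (limit_agree (S k)) by lia; cbn [build]; rewrite extend_new by lia.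
  rewrite (new_row_task _ _ _ n w d) by (trivial; lia).
  rewrite (retract_adm_agree (limit_of_build t0 n0) (build t0 n0 k))
    by (trivial; intros j l Hj Hl; apply limit_agree; lia).
  replace (retract_adm (build t0 n0 k) n (grid w d) i + / INR (S (S d))
    - retract_adm (build t0 n0 k) n (grid w d) i) with (/ INR (S (S d))) by ring.
  rewrite Rabs_pos_eq by (left; apply Rinv_0_lt_compat, lt_0_INR; lia).
  apply Rinv_lt_contravar; [apply Rmult_lt_0_compat; apply lt_0_INR | apply lt_INR]; lia.
Qed.

Lemma limit_universal : universal (limit_of_build t0 n0).
Proof.
  apply hits_universal; [| |exact limit_hits].
  - apply is_dist_of_below; intros n; apply (dist_below_mono n (n0 + n)); [lia|].
    apply (dist_below_agree _ _ _ (limit_agree n)), build_dist.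
  - apply is_proper_of_below; intros n; apply (proper_below_mono n (n0 + n)); [lia|].
    apply (proper_below_agree _ _ _ (limit_agree n)), build_dist.
Qed.

End Construction.

Definition lift_offdiag (s : mat) (c : R) : mat :=
  fun i j => if Nat.eq_dec i j then 0 else s i j + c.

Lemma lift_offdiag_dist s c : is_dist s -> 0 <= c -> is_dist (lift_offdiag s c).
Proof.
  intros [H0 [Hnn [Hs Ht]]] Hc; unfold lift_offdiag; split; [|split; [|split]].
  - intros i; destruct (Nat.eq_dec i i); [reflexivity | easy].
  - intros i j; destruct (Nat.eq_dec i j); [lra | pose proof (Hnn i j); lra].
  - intros i j; destruct (Nat.eq_dec i j), (Nat.eq_dec j i); subst; try easy.
    rewrite Hs; reflexivity.
  - intros i j k; pose proof (Hnn i j); pose proof (Hnn i k); pose proof (Hnn k j);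
      pose proof (Ht i j k).
    destruct (Nat.eq_dec i j), (Nat.eq_dec i k), (Nat.eq_dec k j); subst; try easy; lra.
Qed.

Lemma lift_offdiag_proper s c : is_dist s -> 0 < c -> is_proper (lift_offdiag s c).
Proof.
  intros [_ [Hnn _]] Hc i j Hij; unfold lift_offdiag.
  destruct (Nat.eq_dec i j); [easy | pose proof (Hnn i j); lra].
Qed.

Lemma universal_dense : dense_in_cone universal.
Proof.
  intros U HU [s [Hs HUs]]; destruct (HU s HUs) as [n [eps [Heps Hcyl]]].
  set (t0 := lift_offdiag s (eps / 2)).
  assert (Ht0 : is_dist t0) by (apply lift_offdiag_dist; trivial; lra).
  assert (Hp0 : is_proper t0) by (apply lift_offdiag_proper; trivial; lra).
  exists (limit_of_build t0 (S n)); split.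
  - apply limit_universal; [lia | apply dist_below_of_is_dist; assumption |].
    intros i j _ _; apply Hp0.
  - apply Hcyl; intros i j Hi Hj; rewrite limit_extends by lia.
    unfold t0, lift_offdiag; destruct (Nat.eq_dec i j) as [->|_].
    + rewrite (proj1 Hs), Rminus_0_r, Rabs_R0; assumption.
    + replace (s i j + eps / 2 - s i j) with (eps / 2) by ring; rewrite Rabs_pos_eq; lra.
Qed.

Lemma universal_exists : exists r, universal r.
Proof.
  destruct (universal_dense (fun _ => True)) as [r [Hr _]]; [| |exists r; exact Hr].
  - intros r _; exists 0%nat, 1; split; [lra | trivial].
  - exists (fun _ _ => 0); split; [repeat split; intros; lra | trivial].
Qed.

Lemma weak_open_and U V : weak_open U -> weak_open V -> weak_open (fun r => U r /\ V r).
Proof.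
  intros HU HV r [Ur Vr].
  destruct (HU r Ur) as [n1 [e1 [He1 H1]]], (HV r Vr) as [n2 [e2 [He2 H2]]].
  exists (Nat.max n1 n2), (Rmin e1 e2); split; [apply Rmin_pos; assumption|].
  intros s Hs; split; [apply H1 | apply H2]; intros i j Hi Hj;
    (eapply Rlt_le_trans; [apply Hs; lia | first [apply Rmin_l | apply Rmin_r]]).
Qed.

Definition positive_entry (k : nat) (r : mat) : Prop :=
  let (i, j) := of_nat k in i <> j -> 0 < r i j.

Lemma positive_entry_open k : weak_open (positive_entry k).
Proof.
  unfold positive_entry; destruct (of_nat k) as [i j]; intros r Hr.
  destruct (Nat.eq_dec i j) as [Eij|Nij].
  - exists 0%nat, 1; split; [lra | intros s _ Hij; contradiction].
  - exists (S (Nat.max i j)), (r i j); split; [apply Hr; assumption|].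
    intros s Hs _; pose proof (Rabs_def2 _ _ (Hs i j ltac:(lia) ltac:(lia))); lra.
Qed.

Definition universal_piece (k : nat) (r : mat) : Prop :=
  positive_entry (fst (of_nat k)) r /\
  let '(n, w, d) := untriple (snd (of_nat k)) in hits n w d r.

Lemma universal_piece_open k : weak_open (universal_piece k).
Proof.
  unfold universal_piece; destruct (untriple (snd (of_nat k))) as [[n w] d].
  apply weak_open_and; [apply positive_entry_open | apply hits_open].
Qed.

Lemma universal_Gdelta : Gdelta_in_cone universal.
Proof.
  exists universal_piece; split; [exact universal_piece_open|]; intros r; split.
  - intros Hu; split; [apply Hu|]; intros k; split.
    + unfold positive_entry; destruct (of_nat (fst (of_nat k))) as [i j]; apply (proj1 (proj2 Hu)).
    + destruct (untriple (snd (of_nat k))) as [[n w] d]; apply universal_hits; exact Hu.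
  - intros [Hd Hpieces]; apply hits_universal; trivial.
    + intros i j Hij; destruct (Hpieces (to_nat (to_nat (i, j), 0%nat))) as [Hp _].
      unfold positive_entry in Hp; rewrite cancel_of_to in Hp; cbn [fst] in Hp.
      rewrite cancel_of_to in Hp; auto.
    + intros n w d; destruct (untriple_surj n w d) as [t Ht].
      destruct (Hpieces (to_nat (0%nat, t))) as [_ Hh].
      rewrite cancel_of_to in Hh; cbn [snd] in Hh; rewrite Ht in Hh; exact Hh.
Qed.

Theorem theorem1 :
  (exists r : mat, universal r) /\
  dense_in_cone universal /\ Gdelta_in_cone universal.
Proof.
  split; [exact universal_exists | split; [exact universal_dense | exact universal_Gdelta]].
Qed.
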